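(* Let $S$ be a monoid whose unique maximal right ideal $\mathfrak{M}$ is two-sided, and let $A$ be a right $S$-act having a maximal subact $B$ such that there exists $a\in A\setminus B$ with $\mathfrak{M}=\{s\in S\mid as\in B\}$. Then: (1) for every proper right ideal $I$ of $S$ with $I^2=I$ we have $AI\not\cong A$ (as $S$-acts); (2) for every right ideal $I$ of $S$, $AI=A$ if and only if $I=S$; (3) for every right ideal $I$ of $S$ with $I^2=I$, $AI\cong A$ if and only if $I=S$.
   Context: $S$ is a monoid with identity $1$ having at least one right non-invertible element. A (right) $S$-act is a nonempty set with an action $(a,s)\mapsto as$, $a1=a$, $a(st)=(as)t$; a subact is a nonempty subset closed under the action; a maximal subact is a proper subact not properly contained in another proper subact. $\mathfrak{M}=\{s\in S\mid st\neq1\ \forall t\in S\}$ is the unique maximal right ideal. $AI=\{as\mid a\in A,s\in I\}$ (a subact of $A$), $I^2=\{st\mid s,t\in I\}$. Isomorphism means bijective map $f$ with $f(as)=f(a)s$. *)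

Set Implicit Arguments.

Record monoid := Monoid {
  mcar :> Type;
  mmul : mcar -> mcar -> mcar;
  mone : mcar;
  mmulA : forall x y z, mmul x (mmul y z) = mmul (mmul x y) z;
  mmul1s : forall x, mmul mone x = x;
  mmuls1 : forall x, mmul x mone = x
}.

Record act (S : monoid) := Act {
  acar :> Type;
  aop : acar -> S -> acar;
  aop1 : forall a, aop a (mone S) = a;
  aopM : forall a s t, aop a (mmul S s t) = aop (aop a s) t;
  anonempty : inhabited acar
}.

Section Defs.
Variable S : monoid.

Definition right_invertible (s : S) : Prop := exists t, mmul S s t = mone S.

Definition Mfrak (s : S) : Prop := forall t : S, mmul S s t <> mone S.

Definition right_ideal (I : S -> Prop) : Prop :=
  (exists s, I s) /\ forall s t, I s -> I (mmul S s t).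

Definition two_sided_ideal (I : S -> Prop) : Prop :=
  right_ideal I /\ forall s t, I s -> I (mmul S t s).

Definition proper_subset {T : Type} (P : T -> Prop) : Prop := exists x, ~ P x.

Definition idempotent_ideal (I : S -> Prop) : Prop :=
  forall s, I s <-> exists u v, I u /\ I v /\ s = mmul S u v.

Variable A : act S.

Definition subact (B : A -> Prop) : Prop :=
  (exists x, B x) /\ forall x s, B x -> B (aop A x s).

Definition maximal_subact (B : A -> Prop) : Prop :=
  subact B /\ proper_subset B /\
  forall C : A -> Prop, subact C -> proper_subset C ->
    (forall x, B x -> C x) -> forall x, C x -> B x.

Definition actI (I : S -> Prop) (x : A) : Prop :=
  exists a s, I s /\ x = aop A a s.

(* the subact P of A is isomorphic (as S-act) to A: a bijection f : P -> A
   with f (x s) = f(x) s; f is represented by a total function on A whose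
   restriction to P is the isomorphism *)
Definition subact_iso_to_whole (P : A -> Prop) : Prop :=
  exists f : A -> A,
    (forall x s, P x -> f (aop A x s) = aop A (f x) s) /\
    (forall x y, P x -> P y -> f x = f y -> x = y) /\
    (forall y, exists x, P x /\ f x = y).

End Defs.

(* Since [I] is proper it lies in [M], so [AI ⊆ AM]; and [a ∉ AM]: if [a = y v]
   with [v ∈ M], then [y ∉ B] (else [a ∈ B]), so by maximality of [B] the subact
   [B ∪ aS] is all of [A] and [y = a w], whence [a = a (w v)] with [w v ∈ M]
   because [M] is two-sided, i.e. [a ∈ B].  Hence [AI ≠ A] for proper [I].  An
   isomorphism [f : AI ≅ A] with [I = I²] forces [AI = A]: every [f (b u v)] with
   [u, v ∈ I] equals [f (b u) v ∈ AI]. *)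
From Stdlib Require Import Classical.

Set Implicit Arguments.

Lemma proper_right_ideal_sub_Mfrak (S : monoid) (I : S -> Prop) :
  right_ideal S I -> proper_subset I -> forall s, I s -> Mfrak S s.
Proof.
  intros [_ HI] [s0 Hs0] s Is t Hst.
  apply Hs0. rewrite <- (mmul1s S s0), <- Hst. apply HI, HI, Is.
Qed.

Lemma not_proper_subset_full (T : Type) (P : T -> Prop) :
  ~ proper_subset P -> forall x, P x.
Proof.
  intros Hnp x. apply NNPP. intro Hx. apply Hnp. now exists x.
Qed.

Section ActI.
Variables (S : monoid) (A : act S).

Lemma actI_mono {I J : S -> Prop} :
  (forall s, I s -> J s) -> forall x, actI A I x -> actI A J x.
Proof.
  intros HIJ x [b [s [Is Hx]]]. exists b, s. auto.
Qed.

Lemma actI_full (I : S -> Prop) : I (mone S) -> forall x, actI A I x.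
Proof.
  intros I1 x. exists x, (mone S). split; [exact I1|]. now rewrite aop1.
Qed.

Lemma iso_actI_idempotent_full (I : S -> Prop) :
  idempotent_ideal S I -> subact_iso_to_whole A (actI A I) ->
  forall x, actI A I x.
Proof.
  intros Hid [f [Hf [_ Hsurj]]] y.
  destruct (Hsurj y) as [x [[b [s [Is ->]]] <-]].
  destruct (proj1 (Hid s) Is) as [u [v [Iu [Iv ->]]]].
  rewrite aopM, Hf.
  - exists (f (aop A b u)), v. auto.
  - exists b, u. auto.
Qed.

Lemma subact_iso_to_whole_of_full (P : A -> Prop) :
  (forall x, P x) -> subact_iso_to_whole A P.
Proof.
  intros HP. exists (fun x => x). repeat split; auto. intros y. now exists y.
Qed.

End ActI.

Section MaximalSubact.
Variables (S : monoid) (A : act S) (B : A -> Prop) (a : A).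
Hypothesis (HB : maximal_subact A B) (Ha : ~ B a).

Lemma subact_join_cyclic :
  subact A (fun x => B x \/ exists w, x = aop A a w).
Proof.
  destruct HB as [[_ HBs] _]. split.
  - exists a. right. exists (mone S). now rewrite aop1.
  - intros x s [Bx | [w ->]].
    + left. now apply HBs.
    + right. exists (mmul S w s). now rewrite aopM.
Qed.

Lemma maximal_subact_join_cyclic x : B x \/ exists w, x = aop A a w.
Proof.
  destruct HB as [_ [_ Hmax]].
  destruct (classic (proper_subset (fun x => B x \/ exists w, x = aop A a w)))
    as [Hp | Hnp].
  - exfalso. apply Ha, (Hmax _ subact_join_cyclic Hp); [now left|].
    right. exists (mone S). now rewrite aop1.
  - exact (not_proper_subset_full Hnp x).
Qed.

Hypothesis (HM2 : two_sided_ideal S (Mfrak S)).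
Hypothesis (HMa : forall s : S, Mfrak S s <-> B (aop A a s)).

Lemma generator_notin_actMfrak : ~ actI A (Mfrak S) a.
Proof.
  destruct HB as [[_ HBs] _].
  intros [y [v [Mv Hav]]].
  destruct (maximal_subact_join_cyclic y) as [By | [w ->]].
  - apply Ha. rewrite Hav. now apply HBs.
  - apply Ha. rewrite Hav, <- aopM. apply HMa, (proj2 HM2), Mv.
Qed.

Lemma actI_full_iff (I : S -> Prop) :
  right_ideal S I -> (forall x, actI A I x) <-> (forall s, I s).
Proof.
  intros HI. split.
  - intros Hall. apply not_proper_subset_full. intros Hp.
    apply generator_notin_actMfrak.
    exact (actI_mono (proper_right_ideal_sub_Mfrak HI Hp) (Hall a)).
  - intros Hall. apply actI_full, Hall.
Qed.

End MaximalSubact.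

Theorem proposition3p1 (S : monoid) (A : act S) (B : A -> Prop) (a : A) :
  (exists s : S, ~ right_invertible S s) ->
  two_sided_ideal S (Mfrak S) ->
  maximal_subact A B ->
  ~ B a ->
  (forall s : S, Mfrak S s <-> B (aop A a s)) ->
  (forall I : S -> Prop, right_ideal S I -> proper_subset I -> idempotent_ideal S I ->
      ~ subact_iso_to_whole A (actI A I)) /\
  (forall I : S -> Prop, right_ideal S I ->
      ((forall x : A, actI A I x) <-> (forall s : S, I s))) /\
  (forall I : S -> Prop, right_ideal S I -> idempotent_ideal S I ->
      (subact_iso_to_whole A (actI A I) <-> (forall s : S, I s))).
Proof.
  intros _ HM2 HB Ha HMa.
  pose proof (@actI_full_iff S A B a HB Ha HM2 HMa) as Hfull.
  assert (Hiso : forall I, right_ideal S I -> idempotent_ideal S I ->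
            subact_iso_to_whole A (actI A I) -> forall s, I s).
  { intros I HI Hid Hf. apply (Hfull I HI), iso_actI_idempotent_full; assumption. }
  split; [|split; [exact Hfull|]].
  - intros I HI [s Hs] Hid Hf. exact (Hs (Hiso I HI Hid Hf s)).
  - intros I HI Hid. split; [exact (Hiso I HI Hid)|].
    intros Hall. apply subact_iso_to_whole_of_full, actI_full, Hall.
Qed.
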